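(* Let $(X_1,Y_1),\dots,(X_{n+1},Y_{n+1})$ be exchangeable random elements of $\mathcal{X}\times\mathcal{Y}$, let $f$ be a fixed model, $\mathcal{L}(f,x,y)\in[0,1]$ a known risk map, and $s:\mathcal{X}\to[0,1]$ a fixed score function (independent of the data). Write $L_i=\mathcal{L}(f,X_i,Y_i)$ for $i\in[n+1]$. For any fixed $\gamma\in(0,1)$, the random variable $E_{\gamma,n+1}$ defined below satisfies $E_{\gamma,n+1}\ge0$ and $\mathbb{E}[L_{n+1}E_{\gamma,n+1}]\le 1$.
   Context: Let $\mathcal{M}=\{s(X_i)\}_{i=1}^{n+1}$. For $t\in\mathbb{R}$ and $\ell\in[0,1]$ define $F(t;\ell)=\frac{1}{n+1}\big(\sum_{i=1}^n L_i\mathbf{1}\{s(X_i)\le t\}+\ell\,\mathbf{1}\{s(X_{n+1})\le t\}\big)$ and $t_\gamma(\ell)=\max\{t\in\mathcal{M}:F(t;\ell)\le\gamma\}$, with $\max\emptyset=-\infty$. Define $$E_{\gamma,n+1}=\inf_{\ell\in[0,1]}\frac{(n+1)\mathbf{1}\{s(X_{n+1})\le t_\gamma(\ell)\}}{\sum_{i=1}^n L_i\mathbf{1}\{s(X_i)\le t_\gamma(\ell)\}+\ell\,\mathbf{1}\{s(X_{n+1})\le t_\gamma(\ell)\}},$$ where each ratio is $0$ when its numerator is $0$ and $+\infty$ when its numerator is positive and denominator is $0$; also $E_{\gamma,n+1}=0$ if $\inf_{\ell\in[0,1]}t_\gamma(\ell)=-\infty$. *)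

From HB Require Import structures.
From mathcomp Require Import all_boot all_order all_algebra all_fingroup.
From mathcomp Require Import all_classical all_reals all_analysis.
Set Implicit Arguments. Unset Strict Implicit. Unset Printing Implicit Defensive.
Import Order.TTheory GRing.Theory Num.Theory.
Local Open Scope classical_set_scope.
Local Open Scope ring_scope.

(* Data are indexed by 'I_n.+1; index [ord_max] plays the role of n+1,
   the other indices play the roles of 1..n. *)

Section Evalue.
Variables (R : realType) (n : nat) (gamma : R).
Variables (sc lo : 'I_n.+1 -> R).  (* sc i = s(X_i), lo i = L_i *)

Definition last_idx : 'I_n.+1 := ord_max.

Definition Fcdf (t l : R) : R :=
  (n.+1%:R)^-1 * (\sum_(i < n.+1 | i != last_idx) lo i * (if sc i <= t then 1 else 0)
                  + l * (if sc last_idx <= t then 1 else 0)).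

(* t_gamma(l) = max { t in M : F(t;l) <= gamma }, max of empty = -oo *)
Definition tgam (l : R) : \bar R :=
  ereal_sup [set (sc i)%:E | i in [set i : 'I_n.+1 | Fcdf (sc i) l <= gamma]].

Definition Eratio (l : R) : \bar R :=
  let ind : R := if ((sc last_idx)%:E <= tgam l)%E then 1 else 0 in
  let num : R := n.+1%:R * ind in
  let den : R := \sum_(i < n.+1 | i != last_idx) lo i * (if ((sc i)%:E <= tgam l)%E then 1 else 0)
                 + l * ind in
  if num == 0 then 0%E else if den == 0 then +oo%E else (num / den)%:E.

Definition Evalue : \bar R :=
  if ereal_inf [set tgam l | l in `[0, 1]] == -oo%E then 0%E
  else ereal_inf [set Eratio l | l in `[0, 1]].
End Evalue.

(* Exchangeability of Z_1..Z_{n+1}: the joint law is invariant under any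
   permutation of indices, checked on measurable rectangles (a pi-system
   generating the product sigma-algebra). *)
Definition exchangeable (d : measure_display) (Omega : measurableType d)
  (R : realType) (P : probability Omega R)
  (dZ : measure_display) (T : measurableType dZ) (n : nat)
  (Z : 'I_n.+1 -> Omega -> T) : Prop :=
  forall (sigma : {perm 'I_n.+1}) (B : 'I_n.+1 -> set T),
    (forall i, measurable (B i)) ->
    P (\bigcap_i (Z i @^-1` B i)) = P (\bigcap_i (Z (sigma i) @^-1` B i)).

From HB Require Import structures.
From mathcomp Require Import all_boot all_order all_algebra all_fingroup.
From mathcomp Require Import all_classical all_reals all_analysis.
From mathcomp Require Import measurable_realfun.
Import Order.TTheory GRing.Theory Num.Theory.
Local Open Scope classical_set_scope.
Local Open Scope ring_scope.

(* Taking [l = L_{n+1}] in the infimum bounds [L_{n+1} E] by the oracle weight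
   [(n+1) L_{n+1} 1{s(X_{n+1}) <= T} / sum_k L_k 1{s(X_k) <= T}], where the threshold [T] is
   computed from all the true losses, hence is a symmetric function of the data. The n+1
   oracle weights sum to at most [n+1] and, by exchangeability, have the same expectation,
   which is therefore at most 1. *)

Section OracleWeight.
Context {R : realType} {n : nat} (gamma : R).
Implicit Types (a b : 'I_n.+1 -> R).

Definition weighted_cdf a b (t : R) : R := \sum_(k < n.+1) b k * (if a k <= t then 1 else 0).

Definition admissible a b (i : 'I_n.+1) : bool :=
  (n.+1%:R)^-1 * weighted_cdf a b (a i) <= gamma.

(* [selected a b k] iff [s(X_k) <= t_gamma(L_{n+1})], see [le_tgam_selected]. *)
Definition selected a b (k : 'I_n.+1) : bool :=
  [exists i, admissible a b i && (a k <= a i)].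

Definition selected_mass a b : R :=
  \sum_(k < n.+1) b k * (if selected a b k then 1 else 0).

Definition oracle_weight a b (j : 'I_n.+1) : R :=
  n.+1%:R * (b j * (if selected a b j then 1 else 0)) / selected_mass a b.

Lemma indicator_ge0 (c : bool) : 0 <= (if c then 1 else 0 : R).
Proof. by case: c. Qed.

Lemma sum_but_last (F : 'I_n.+1 -> R) :
  \sum_(i < n.+1 | i != last_idx n) F i + F (last_idx n) = \sum_(i < n.+1) F i.
Proof. by rewrite [RHS](bigD1 (last_idx n)) //= addrC. Qed.

Lemma Fcdf_at_last_loss a b t :
  Fcdf a b t (b (last_idx n)) = (n.+1%:R)^-1 * weighted_cdf a b t.
Proof. by rewrite /Fcdf sum_but_last. Qed.

Lemma le_tgam_selected a b k :
  ((a k)%:E <= tgam gamma a b (b (last_idx n)))%E = selected a b k.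
Proof.
rewrite /tgam; have -> : [set i | Fcdf a b (a i) (b (last_idx n)) <= gamma] = admissible a b.
  by apply/seteqP; split => i /=; rewrite /admissible Fcdf_at_last_loss.
apply/idP/existsP => [|[i /andP[adm_i le_ki]]]; last first.
  apply: (@le_trans _ _ (a i)%:E); first by rewrite lee_fin.
  by apply: ereal_sup_ubound; exists i.
apply: contraPP => /forallNP none_above.
apply/negP; rewrite -ltNge.
apply: (@le_lt_trans _ _ (\big[Order.max/-oo%E]_(i | admissible a b i) (a i)%:E)).
  apply: ge_ereal_sup => _ [i /= adm_i <-].
  exact: (le_bigmax_cond _ (fun i => (a i)%:E) adm_i).
apply: bigmax_lt; first by rewrite ltNye.
move=> i adm_i; rewrite lte_fin ltNge; apply/negP => le_ki.
by apply: (none_above i); rewrite adm_i le_ki.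
Qed.

Lemma selected_mass_ge0 a b : (forall i, 0 <= b i) -> 0 <= selected_mass a b.
Proof. by move=> b0; apply: sumr_ge0 => i _; rewrite mulr_ge0 ?indicator_ge0. Qed.

Lemma oracle_weight_ge0 a b j : (forall i, 0 <= b i) -> 0 <= oracle_weight a b j.
Proof.
move=> b0; rewrite /oracle_weight divr_ge0 ?selected_mass_ge0 //.
by rewrite mulr_ge0 ?mulr_ge0 ?indicator_ge0.
Qed.

(* The total oracle weight is [n+1] or, when nothing is selected, [0] (as [0^-1 = 0]). *)
Lemma sum_oracle_weight_le a b : \sum_(j < n.+1) oracle_weight a b j <= n.+1%:R.
Proof.
rewrite /oracle_weight -mulr_suml -mulr_sumr -/(selected_mass a b).
have [->|D0] := eqVneq (selected_mass a b) 0; first by rewrite mulr0 mul0r ler0n.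
by rewrite mulfK.
Qed.

Lemma Eratio_ge0 a b l : (forall i, 0 <= b i) -> 0 <= l -> (0 <= Eratio gamma a b l)%E.
Proof.
move=> b0 l0; rewrite /Eratio /=; case: ifP => // _; case: ifP => // _.
rewrite lee_fin divr_ge0 ?mulr_ge0 ?indicator_ge0 // addr_ge0 ?mulr_ge0 ?indicator_ge0 //.
by apply: sumr_ge0 => i _; rewrite mulr_ge0 ?indicator_ge0.
Qed.

Lemma Evalue_ge0 a b : (forall i, 0 <= b i) -> (0 <= Evalue gamma a b)%E.
Proof.
move=> b0; rewrite /Evalue; case: ifP => // _.
apply: le_ereal_inf_tmp => _ [l /= l01 <-].
by apply: Eratio_ge0 => //; move: l01; rewrite in_itv /= => /andP[].
Qed.

Lemma mul_Eratio_at_last_loss a b : (forall i, 0 <= b i) ->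
  ((b (last_idx n))%:E * Eratio gamma a b (b (last_idx n)) =
   (oracle_weight a b (last_idx n))%:E)%E.
Proof.
move=> b0; rewrite /Eratio /= le_tgam_selected.
under eq_bigr => i _ do rewrite le_tgam_selected.
rewrite sum_but_last -/(selected_mass a b) /oracle_weight.
case sel_last: (selected a b (last_idx n)); last by rewrite !mulr0 eqxx mul0r mule0.
rewrite mulr1 pnatr_eq0 /=.
have [D0|D0] := eqVneq (selected_mass a b) 0; last first.
  by rewrite -EFinM mulr1 mulrA [b _ * _]mulrC.
(* A zero denominator forces [L_{n+1} = 0], and [0 * +oo = 0]. *)
have : b (last_idx n) <= selected_mass a b.
  rewrite /selected_mass -sum_but_last sel_last mulr1 lerDr.
  by apply: sumr_ge0 => i _; rewrite mulr_ge0 ?indicator_ge0.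
rewrite D0 => bl0; have -> : b (last_idx n) = 0 by apply/eqP; rewrite eq_le bl0 b0.
by rewrite mul0e mul0r mulr0 mul0r.
Qed.

Lemma mul_Evalue_le_oracle_weight a b : (forall i, 0 <= b i <= 1) ->
  ((b (last_idx n))%:E * Evalue gamma a b <= (oracle_weight a b (last_idx n))%:E)%E.
Proof.
move=> b01; have b0 i : 0 <= b i by case/andP: (b01 i).
rewrite -mul_Eratio_at_last_loss //; apply: lee_wpmul2l; first by rewrite lee_fin.
rewrite /Evalue; case: ifP => _; first exact: Eratio_ge0.
by apply: ereal_inf_lbound; exists (b (last_idx n)); rewrite //= in_itv /= b01.
Qed.

Section Permutation.
Variable s : {perm 'I_n.+1}.

Lemma weighted_cdf_perm a b t : weighted_cdf (a \o s) (b \o s) t = weighted_cdf a b t.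
Proof. by rewrite /weighted_cdf [RHS](reindex_inj (@perm_inj _ s)). Qed.

Lemma admissible_perm a b i : admissible (a \o s) (b \o s) i = admissible a b (s i).
Proof. by rewrite /admissible weighted_cdf_perm. Qed.

Lemma selected_perm a b k : selected (a \o s) (b \o s) k = selected a b (s k).
Proof.
apply/existsP/existsP => [[i]|[i]]; first by exists (s i); rewrite -admissible_perm.
by exists (s^-1 i)%g; rewrite admissible_perm /= permKV.
Qed.

Lemma selected_mass_perm a b : selected_mass (a \o s) (b \o s) = selected_mass a b.
Proof.
rewrite /selected_mass [RHS](reindex_inj (@perm_inj _ s)).
by apply: eq_bigr => k _; rewrite selected_perm.
Qed.

Lemma oracle_weight_perm a b j : oracle_weight (a \o s) (b \o s) j = oracle_weight a b (s j).
Proof. by rewrite /oracle_weight selected_perm selected_mass_perm. Qed.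

End Permutation.
End OracleWeight.

Lemma measurable_invr {R : realType} : measurable_fun setT (@GRing.inv R).
Proof.
move=> _ U mU; rewrite setTI.
have -> : GRing.inv @^-1` U =
    ([set r : R | r != 0] `&` GRing.inv @^-1` U) `|` ([set 0] `&` GRing.inv @^-1` U).
  apply/seteqP; split => x /=; last by case=> -[].
  by case: (eqVneq x 0) => [->|x0] Ux; [right|left].
apply: measurableU.
  apply: (open_continuous_measurable_fun (D := [set r : R | r != 0])) => //.
    by apply/in_setP => x /= x0; exact: inv_continuous.
  exact: open_measurable.
have [U0|U0] := pselect (U 0).
  have -> : [set 0] `&` GRing.inv @^-1` U = [set 0 : R].
    by apply/seteqP; split => x /=; [case|move=> ->; rewrite invr0].
  exact: measurable_set1.
have -> : [set 0] `&` GRing.inv @^-1` U = set0.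
  by apply/seteqP; split => x //= [-> /=]; rewrite invr0.
exact: measurable0.
Qed.

Section FiniteMeasurability.
Context {d} {T : measurableType d}.

Lemma measurable_indicator {R : realType} (c : T -> bool) : measurable_fun setT c ->
  measurable_fun setT (fun z => if c z then 1 else 0 : R).
Proof. by move=> mc; apply: measurable_fun_ifT => //; exact: measurable_cst. Qed.

Lemma measurable_exists {I : finType} (P : I -> T -> bool) :
  (forall i, measurable_fun setT (P i)) ->
  measurable_fun setT (fun z => [exists i, P i z]).
Proof.
move=> mP; have -> : (fun z => [exists i, P i z]) = (fun z => has (P^~ z) (enum I)).
  apply/funext => z; apply/existsP/hasP => [[i Pi]|[i _ Pi]]; exists i => //.
  by rewrite mem_enum.
elim: (enum I) => [|i r IH] /=; [exact: measurable_cst | exact: measurable_or].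
Qed.

End FiniteMeasurability.

Section OracleWeightMeasurable.
Context {d} {T : measurableType d} {R : realType} {n : nat} (gamma : R).
Variables (A B : 'I_n.+1 -> T -> R).
Hypotheses (mA : forall i, measurable_fun setT (A i))
           (mB : forall i, measurable_fun setT (B i)).
Local Notation a z := (fun i => A i z).
Local Notation b z := (fun i => B i z).

Lemma measurable_weighted_cdf i :
  measurable_fun setT (fun z => weighted_cdf (a z) (b z) (A i z)).
Proof.
apply: measurable_sum => k; apply: measurable_funM => //.
by apply: measurable_indicator; exact: measurable_fun_ler.
Qed.

Lemma measurable_admissible i :
  measurable_fun setT (fun z => admissible gamma (a z) (b z) i).
Proof.
apply: measurable_fun_ler; last exact: measurable_cst.
by apply: measurable_funM; [exact: measurable_cst | exact: measurable_weighted_cdf].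
Qed.

Lemma measurable_selected k : measurable_fun setT (fun z => selected gamma (a z) (b z) k).
Proof.
apply: measurable_exists => i; apply: measurable_and; first exact: measurable_admissible.
exact: measurable_fun_ler.
Qed.

Lemma measurable_selected_mass :
  measurable_fun setT (fun z => selected_mass gamma (a z) (b z)).
Proof.
apply: measurable_sum => k; apply: measurable_funM => //.
by apply: measurable_indicator; exact: measurable_selected.
Qed.

Lemma measurable_oracle_weight j :
  measurable_fun setT (fun z => oracle_weight gamma (a z) (b z) j).
Proof.
apply: measurable_funM; last exact: measurableT_comp measurable_invr measurable_selected_mass.
apply: measurable_funM; first exact: measurable_cst.
by apply: measurable_funM => //; apply: measurable_indicator; exact: measurable_selected.
Qed.

End OracleWeightMeasurable.

Definition rectangles {d} (T : measurableType d) (n : nat) : set (set ('I_n.+1 -> T)) :=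
  [set \bigcap_i ((fun z => z i) @^-1` B i) |
     B in [set B : 'I_n.+1 -> set T | forall i, measurable (B i)]].

Notation rectangle_sigma T n := (g_sigma_algebraType (rectangles T n)).

Section Rectangles.
Context {d} {T : measurableType d} {n : nat}.

Lemma measurable_coord i : measurable_fun setT (fun z : rectangle_sigma T n => z i).
Proof.
move=> _ U mU; rewrite setTI; apply: sub_sigma_algebra.
exists (fun k => if k == i then U else setT).
  by move=> k; case: ifP => _ //; exact: measurableT.
apply/seteqP; split => z /=; first by move=> /(_ i I); rewrite eqxx.
by move=> Uz k _; case: ifP => [/eqP -> //|].
Qed.

Lemma rectangles_setI_closed : setI_closed (rectangles T n).
Proof.
move=> _ _ [B1 mB1 <-] [B2 mB2 <-].
exists (fun i => B1 i `&` B2 i); first by move=> i; exact: measurableI.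
apply/seteqP; split => z /=; first by move=> z12; split => i _; have [] := z12 i I.
by move=> [z1 z2] i _; split; [exact: z1 | exact: z2].
Qed.

Definition joint {dO} {Omega : measurableType dO} (Y : 'I_n.+1 -> Omega -> T) :
  Omega -> rectangle_sigma T n := fun w i => Y i w.

Lemma measurable_joint {dO} {Omega : measurableType dO} {Y : 'I_n.+1 -> Omega -> T} :
  (forall i, measurable_fun setT (Y i)) -> measurable_fun setT (joint Y).
Proof.
move=> mY.
apply: (@measurability _ _ Omega (rectangle_sigma T n) setT (joint Y) (rectangles T n)) => //.
move=> _ [_ [B mB <-] <-]; rewrite setTI preimage_bigcap.
apply: fin_bigcap_measurable; first exact: finite_finset.
by move=> i _; have := mY i measurableT _ (mB i); rewrite setTI.
Qed.

End Rectangles.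

Section Exchangeable.
Context {R : realType} {d} {Omega : measurableType d} (P : probability Omega R)
  {dZ} {T : measurableType dZ} {n : nat} (Z : 'I_n.+1 -> Omega -> T).
Hypotheses (mZ : forall i, measurable_fun setT (Z i)) (exZ : exchangeable P Z).

Lemma measurable_joint_perm (s : {perm 'I_n.+1}) : measurable_fun setT (joint (Z \o s)).
Proof. by apply: measurable_joint => i; exact: mZ. Qed.

Lemma joint_law_perm (s : {perm 'I_n.+1}) (U : set (rectangle_sigma T n)) : measurable U ->
  pushforward P (joint (Z \o s)) U = pushforward P (joint Z) U.
Proof.
move=> mU.
have mZs := measurable_joint_perm s; have mZ1 := measurable_joint mZ.
pose mus : {measure set _ -> \bar R} := pushforward P (joint (Z \o s)).
pose mu : {measure set _ -> \bar R} := pushforward P (joint Z).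
change (mus mZs U = mu mZ1 U).
apply: (@measure_unique _ R (rectangle_sigma T n) (rectangles T n) (fun=> setT) erefl
  _ _ _ (mus mZs) (mu mZ1)) => //.
- exact: rectangles_setI_closed.
- move=> _; exists (fun=> setT); first by move=> i; exact: measurableT.
  by apply/seteqP; split => z //= _ i _.
- by apply/seteqP; split => z //= _; exists 0%N.
- by move=> _ [B mB <-]; rewrite /mus /mu /= /pushforward !preimage_bigcap -exZ.
- move=> _; rewrite /mus /= /pushforward preimage_setT probability_setT; exact: ltry.
Qed.

Lemma ge0_integral_joint_perm (s : {perm 'I_n.+1}) (h : rectangle_sigma T n -> \bar R) :
  measurable_fun setT h -> (forall z, (0 <= h z)%E) ->
  (\int[P]_w h (joint (Z \o s) w) = \int[P]_w h (joint Z w))%E.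
Proof.
move=> mh h0.
have pushE Y : (forall i, measurable_fun setT (Y i)) ->
    (\int[P]_w h (joint Y w) = \int[pushforward P (joint Y)]_z h z)%E.
  move=> mY; rewrite ge0_integral_pushforward ?preimage_setT //.
  exact: measurable_joint.
rewrite !pushE //; last by move=> i; exact: mZ.
apply: eq_measure_integral; first exact: measurable_joint mZ.
  exact: measurable_joint_perm.
by move=> *; exact: joint_law_perm.
Qed.

(* Exchangeability forces the [n+1] equivariant weights to have equal expectations. *)
Lemma exchangeable_equivariant_weight_le1 (g : 'I_n.+1 -> rectangle_sigma T n -> R) :
  (forall j, measurable_fun setT (g j)) -> (forall j z, 0 <= g j z) ->
  (forall z, \sum_(j < n.+1) g j z <= n.+1%:R) ->
  (forall (s : {perm 'I_n.+1}) j z, g j (z \o s) = g (s j) z) ->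
  (\int[P]_w (g ord_max (joint Z w))%:E <= 1)%E.
Proof.
move=> mg g0 sum_g g_perm.
set I := (\int[P]_w (g ord_max (joint Z w))%:E)%E.
have mgE j : measurable_fun setT (fun z => (g j z)%:E) by exact/measurable_EFinP.
have I_eq j : (\int[P]_w (g j (joint Z w))%:E)%E = I.
  rewrite /I -(ge0_integral_joint_perm (tperm ord_max j) _ (mgE ord_max)); last first.
    by move=> z; rewrite lee_fin.
  apply: eq_integral => w _; congr (_%:E).
  by have := g_perm (tperm ord_max j) ord_max (joint Z w); rewrite tpermL.
have : (n.+1%:R%:E * I <= n.+1%:R%:E)%E.
  have -> : (n.+1%:R%:E * I = \sum_(j < n.+1) I)%E by rewrite sumr_const card_ord mule_natl.
  under eq_bigr => j _ do rewrite -(I_eq j).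
  have mgZ j : measurable_fun setT (fun w => (g j (joint Z w))%:E).
    exact: measurableT_comp (mgE j) (measurable_joint mZ).
  rewrite -ge0_integral_sum //; last by move=> j w _; rewrite lee_fin.
  apply: (@le_trans _ _ (\int[P]_w (n.+1%:R)%:E)%E).
    apply: ge0_le_integral => //.
    - by move=> w _; apply: sume_ge0 => j _; rewrite lee_fin.
    - exact: emeasurable_fun_sum.
    - by move=> w _; rewrite sumEFin lee_fin.
  rewrite integral_cst // -[leRHS]mule1; apply: lee_wpmul2l => //; exact: probability_le1.
by rewrite -[leRHS]mule1 lee_pmul2l.
Qed.

End Exchangeable.

(* The integrand [L_{n+1} E] is not known to be measurable; no measurability is needed since
   the integral of a nonnegative function is the supremum over the simple functions below it. *)
Lemma ge0_le_integralT_nonmeasurable {d} {T : measurableType d} {R : realType}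
    (mu : {measure set T -> \bar R}) (f g : T -> \bar R) :
  (forall x, (0 <= f x)%E) -> (forall x, (f x <= g x)%E) ->
  (\int[mu]_x f x <= \int[mu]_x g x)%E.
Proof.
move=> f0 fg; have g0 x : (0 <= g x)%E by apply: le_trans (fg x).
rewrite !ge0_integralTE //.
apply: ge_ereal_sup => _ [h hf <-]; apply: ereal_sup_ubound; exists h => //= x.
exact: le_trans (hf x) (fg x).
Qed.

Lemma exchangeable_loss_Evalue_le1 {R : realType} {d} {Omega : measurableType d}
    (P : probability Omega R) {dZ} {T : measurableType dZ} {n : nat}
    (Z : 'I_n.+1 -> Omega -> T) (gamma : R) (Lf sf : T -> R) :
  (forall i, measurable_fun setT (Z i)) -> exchangeable P Z ->
  measurable_fun setT Lf -> measurable_fun setT sf -> (forall t, 0 <= Lf t <= 1) ->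
  (\int[P]_w ((Lf (Z ord_max w))%:E *
     Evalue gamma (fun i => sf (Z i w)) (fun i => Lf (Z i w))) <= 1)%E.
Proof.
move=> mZ exZ mLf msf Lf01; have Lf0 t : 0 <= Lf t by case/andP: (Lf01 t).
pose g j (z : rectangle_sigma T n) := oracle_weight gamma (sf \o z) (Lf \o z) j.
apply: le_trans (exchangeable_equivariant_weight_le1 P Z mZ exZ g _ _ _ _).
- apply: ge0_le_integralT_nonmeasurable => w.
    by rewrite mule_ge0 ?lee_fin ?Evalue_ge0.
  exact: mul_Evalue_le_oracle_weight.
- have mcoord (h : T -> R) i : measurable_fun setT h ->
      measurable_fun setT (fun z : rectangle_sigma T n => h (z i)).
    by move=> mh; exact: measurableT_comp mh (measurable_coord i).
  exact: (measurable_oracle_weight gamma _ _ (mcoord sf ^~ msf) (mcoord Lf ^~ mLf)).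
- by move=> j z; apply: oracle_weight_ge0 => i; exact: Lf0.
- by move=> z; exact: sum_oracle_weight_le.
- by move=> s j z; exact: oracle_weight_perm.
Qed.

Theorem theorem4p1
  (R : realType) (d : measure_display) (Omega : measurableType d)
  (P : probability Omega R)
  (dx dy : measure_display) (X : measurableType dx) (Y : measurableType dy)
  (n : nat) (Z : 'I_n.+1 -> Omega -> X * Y)
  (Model : Type) (f : Model) (Loss : Model -> X -> Y -> R) (s : X -> R)
  (gamma : R) :
  (forall i, measurable_fun setT (Z i)) ->
  exchangeable P Z ->
  (forall x y, 0 <= Loss f x y <= 1) ->
  measurable_fun setT (fun z : X * Y => Loss f z.1 z.2) ->
  (forall x, 0 <= s x <= 1) ->
  measurable_fun setT s ->
  0 < gamma < 1 ->
  let E := fun w => Evalue gamma (fun i => s (Z i w).1)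
                                 (fun i => Loss f (Z i w).1 (Z i w).2) in
  (forall w, (0 <= E w)%E) /\
  (\int[P]_w ((Loss f (Z ord_max w).1 (Z ord_max w).2)%:E * E w) <= 1)%E.
Proof.
move=> mZ exZ L01 mL _ ms _ E; split.
  by move=> w; apply: Evalue_ge0 => i; case/andP: (L01 (Z i w).1 (Z i w).2).
apply: (exchangeable_loss_Evalue_le1 P Z gamma (fun z => Loss f z.1 z.2) (fun z => s z.1))
  => //.
exact: measurableT_comp ms measurable_fst.
Qed.
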